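(* Let $P,Q\in W^{(l)}\setminus\{0\}$. (1) If $w(P)$ and $w(Q)$ are not aligned, then $[P,Q]\neq0$ and $w([P,Q])=w(P)+w(Q)-(1,1)$. (2) If $\overline w(P)$ and $\overline w(Q)$ are not aligned, then $[P,Q]\ne0$ and $\overline w([P,Q])=\overline w(P)+\overline w(Q)-(1,1)$.
   Context: $K$ is a field of characteristic zero, $l\in\mathbb{N}$. $W^{(l)}$ is the associative $K$-algebra with $K$-basis $\{X^{i/l}Y^j:i\in\mathbb{Z},j\in\mathbb{N}_0\}$, powers of $X$ multiplying as Laurent monomials and $[Y,X^\alpha]=\alpha X^{\alpha-1}$ for $\alpha\in\frac1l\mathbb{Z}$. $\mathrm{Supp}(P)$ is the set of $(i/l,j)$ such that $X^{i/l}Y^j$ has nonzero coefficient in $P$. $w(P)$: among the points $(a,b)\in\mathrm{Supp}(P)$ maximizing $a-b$, the one with largest $a$; $\overline w(P)$: among the points maximizing $b-a$, the one with largest $b$. Two vectors $(a_1,a_2),(b_1,b_2)$ are aligned if $a_1b_2-a_2b_1=0$. *)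

From HB Require Import structures.
From mathcomp Require Import all_boot all_order all_algebra.
Set Implicit Arguments. Unset Strict Implicit. Unset Printing Implicit Defensive.
Import Order.TTheory GRing.Theory Num.Theory.
Local Open Scope ring_scope.

(* A monomial X^(i/l) Y^j is indexed by
   (i, j) : int * nat.  An element of W^(l) is presented as a formal finite
   sum of terms (coefficient, monomial); two presentations denote the same
   element iff they have the same coefficient function [coefW]. *)
Definition mon := (int * nat)%type.
Definition Wl (K : fieldType) := seq (K * mon).

Section W.
Variables (K : fieldType) (l : nat).

Definition coefW (P : Wl K) (m : mon) : K := \sum_(x <- P | x.2 == m) x.1.

Definition expK (i : int) : K := (i%:~R) / (l%:R).

Definition ffK (a : K) (t : nat) : K := \prod_(s < t) (a - s%:R).

(* X^a Y^j * X^b Y^k = sum_t C(j,t) b^(t falling) X^(a+b-t) Y^(j+k-t),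
   the normal ordering consequence of [Y, X^b] = b X^(b-1). *)
Definition mulT (x y : K * mon) : Wl K :=
  let: (c, (i, j)) := x in let: (d, (i', k)) := y in
  [seq (c * d * ('C(j, t))%:R * ffK (expK i') t,
        (i + i' - (t * l)%:Z, (j + k - t)%N)) | t <- iota 0 j.+1].

Definition mulW (P Q : Wl K) : Wl K := flatten [seq mulT x y | x <- P, y <- Q].

Definition oppW (P : Wl K) : Wl K := [seq (- x.1, x.2) | x <- P].

Definition commW (P Q : Wl K) : Wl K := mulW P Q ++ oppW (mulW Q P).

Definition zeroW (P : Wl K) : Prop := forall m, coefW P m = 0.

Definition pt (m : mon) : rat * rat := ((m.1)%:~R / (l%:R), (m.2)%:R).

Definition inSupp (P : Wl K) (p : rat * rat) : Prop :=
  exists m, coefW P m != 0 /\ pt m = p.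

Definition is_w (P : Wl K) (p : rat * rat) : Prop :=
  inSupp P p /\
  forall q, inSupp P q ->
    (q.1 - q.2 < p.1 - p.2) || ((q.1 - q.2 == p.1 - p.2) && (q.1 <= p.1)).

Definition is_wbar (P : Wl K) (p : rat * rat) : Prop :=
  inSupp P p /\
  forall q, inSupp P q ->
    (q.2 - q.1 < p.2 - p.1) || ((q.2 - q.1 == p.2 - p.1) && (q.2 <= p.2)).

End W.

Definition aligned (a b : rat * rat) : Prop := a.1 * b.2 - a.2 * b.1 = 0.

Definition addpt (a b : rat * rat) : rat * rat := (a.1 + b.1, a.2 + b.2).
Definition subpt (a b : rat * rat) : rat * rat := (a.1 - b.1, a.2 - b.2).

From mathcomp Require Import all_boot all_order all_algebra.
From mathcomp Require Import ring lra.
Set Implicit Arguments. Unset Strict Implicit. Unset Printing Implicit Defensive.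
Import Order.TTheory GRing.Theory Num.Theory.
Local Open Scope ring_scope.

(* The coefficient of a monomial in [P, Q] is a double sum over the supports
   of P and Q of coefficients of commutators of monomials.  The commutator of
   X^(i1/l) Y^j1 and X^(i2/l) Y^j2 only involves monomials at the points
   p1 + p2 - (t, t) with t >= 1, and its coefficient for t = 1 is
   (j1 i2 - j2 i1) / l, which in characteristic zero vanishes exactly when p1
   and p2 are aligned.  Shifting along the diagonal preserves a - b, so every
   support point of [P, Q] is dominated by w(P) + w(Q) - (1, 1), and only the
   pair (w(P), w(Q)) reaches that point, where it contributes a nonzero
   coefficient.  Reversing the sign of a - b gives the statement for wbar. *)

Section BigSums.
Variable R : nmodType.

Lemma sum_neq0_exists (I : eqType) (r : seq I) (F : I -> R) :
  \sum_(i <- r) F i != 0 -> exists2 i, i \in r & F i != 0.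
Proof.
have [/hasP //|/hasPn noF] := boolP (has (fun i => F i != 0) r).
by rewrite big1_seq ?eqxx // => i /andP[_ /noF /negPn /eqP].
Qed.

Lemma sum_seq_only (I : eqType) (r : seq I) (F : I -> R) a : uniq r -> a \in r ->
  (forall i, i \in r -> F i != 0 -> i = a) -> \sum_(i <- r) F i = F a.
Proof.
move=> ur ar onlyF; rewrite (bigD1_seq a) //= big1_seq ?addr0 // => i /andP[ia ir].
by apply: contraNeq ia => /(onlyF _ ir) ->.
Qed.

End BigSums.

Lemma intr_posz (R : pzRingType) (n : nat) : (n%:Z)%:~R = n%:R :> R.
Proof. by []. Qed.

Section Coefficients.
Variables (K : fieldType) (l : nat).

Lemma coefW_cons (x : K * mon) (P : Wl K) m :
  coefW (x :: P) m = (if x.2 == m then x.1 else 0) + coefW P m.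
Proof. by rewrite /coefW big_cons; case: ifP; rewrite ?add0r. Qed.

Lemma coefW_cat (P Q : Wl K) m : coefW (P ++ Q) m = coefW P m + coefW Q m.
Proof. by rewrite /coefW big_cat. Qed.

Lemma coefW_oppW (P : Wl K) m : coefW (oppW P) m = - coefW P m.
Proof. by rewrite /coefW /oppW big_map sumrN. Qed.

Definition suppW (P : Wl K) : seq mon := undup [seq x.2 | x <- P].

Lemma suppW_coefW (P : Wl K) m : coefW P m != 0 -> m \in suppW P.
Proof.
apply: contraR; rewrite mem_undup => Pm.
rewrite /coefW big1_seq // => x /andP[/eqP xm xP].
by move: Pm; rewrite -xm map_f.
Qed.

Lemma sum_terms_coefW (P : Wl K) (F : mon -> K) (S : seq mon) : uniq S ->
  {subset [seq x.2 | x <- P] <= S} ->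
  \sum_(x <- P) x.1 * F x.2 = \sum_(m <- S) coefW P m * F m.
Proof.
move=> uS; elim: P => [|x P IH] PS.
  by rewrite big_nil big1 // => m _; rewrite /coefW big_nil mul0r.
rewrite big_cons IH; last by move=> m mP; apply: PS; rewrite inE mP orbT.
under [RHS]eq_bigr => m _ do rewrite coefW_cons mulrDl.
rewrite big_split /=; congr (_ + _).
rewrite (bigD1_seq x.2) ?PS ?inE ?eqxx //= big1 ?addr0 // => m.
by rewrite eq_sym => /negbTE ->; rewrite mul0r.
Qed.

Definition cmul (m1 m2 m : mon) : K := coefW (mulT l (1, m1) (1, m2)) m.
Definition ccomm (m1 m2 m : mon) : K := cmul m1 m2 m - cmul m2 m1 m.

Lemma coefW_mulT c d m1 m2 m :
  coefW (mulT l (c, m1) (d, m2)) m = c * d * cmul m1 m2 m.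
Proof.
case: m1 m2 => i j [i' k]; rewrite /cmul /mulT /coefW !big_map mulr_sumr.
by apply: eq_bigr => t _ /=; rewrite !mul1r !mulrA.
Qed.

Lemma coefW_mulW (P Q : Wl K) m : coefW (mulW l P Q) m =
  \sum_(x <- P) \sum_(y <- Q) x.1 * y.1 * cmul x.2 y.2 m.
Proof.
rewrite /mulW /coefW big_flatten /= big_allpairs_dep.
by apply: eq_bigr => -[c m1] _; apply: eq_bigr => -[d m2] _; rewrite -coefW_mulT.
Qed.

Lemma coefW_commW (P Q : Wl K) m : coefW (commW l P Q) m =
  \sum_(m1 <- suppW P) coefW P m1 *
    \sum_(m2 <- suppW Q) coefW Q m2 * ccomm m1 m2 m.
Proof.
rewrite /commW coefW_cat coefW_oppW !coefW_mulW [X in _ - X]exchange_big -sumrB.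
transitivity (\sum_(x <- P) x.1 * \sum_(y <- Q) y.1 * ccomm x.2 y.2 m).
  apply: eq_bigr => x _; rewrite -sumrB mulr_sumr.
  by apply: eq_bigr => y _; rewrite /ccomm; ring.
rewrite (sum_terms_coefW (S := suppW P) (fun m1 => \sum_(y <- Q) y.1 * ccomm m1 y.2 m))
  ?undup_uniq //; last by move=> m1; rewrite mem_undup.
apply: eq_bigr => m1 _; congr (_ * _).
rewrite (sum_terms_coefW (S := suppW Q) (ccomm m1 ^~ m)) ?undup_uniq // => m2.
by rewrite mem_undup.
Qed.

Lemma coefW_commW_neq0 (P Q : Wl K) m : coefW (commW l P Q) m != 0 ->
  exists m1 m2, [/\ coefW P m1 != 0, coefW Q m2 != 0 & ccomm m1 m2 m != 0].
Proof.
rewrite coefW_commW => /sum_neq0_exists[m1 _]; rewrite mulf_eq0 negb_or.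
case/andP=> P1 /sum_neq0_exists[m2 _]; rewrite mulf_eq0 negb_or => /andP[Q2 c12].
by exists m1, m2.
Qed.

Lemma coefW_commW_single (P Q : Wl K) mP mQ m :
  coefW P mP != 0 -> coefW Q mQ != 0 ->
  (forall m1 m2, coefW P m1 != 0 -> coefW Q m2 != 0 -> ccomm m1 m2 m != 0 ->
     m1 = mP /\ m2 = mQ) ->
  coefW (commW l P Q) m = coefW P mP * (coefW Q mQ * ccomm mP mQ m).
Proof.
move=> PmP QmQ only; rewrite coefW_commW.
have inner m1 : coefW P m1 != 0 ->
    \sum_(m2 <- suppW Q) coefW Q m2 * ccomm m1 m2 m = coefW Q mQ * ccomm m1 mQ m.
  move=> P1; apply: sum_seq_only; rewrite ?undup_uniq ?suppW_coefW // => m2 _.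
  by rewrite mulf_eq0 negb_or => /andP[Q2 /(only _ _ P1 Q2)][].
rewrite (sum_seq_only (a := mP)) ?undup_uniq ?suppW_coefW ?inner // => m1 _.
rewrite mulf_eq0 negb_or => /andP[P1]; rewrite inner // mulf_eq0 negb_or.
by case/andP=> _ /(only _ _ P1 QmQ)[].
Qed.

End Coefficients.

Arguments cmul {K} l m1 m2 m.
Arguments ccomm {K} l m1 m2 m.

Section Monomials.
Variables (K : fieldType) (l : nat).
Hypothesis l_gt0 : (0 < l)%N.

Lemma ffK0 (a : K) : ffK a 0 = 1.
Proof. by rewrite /ffK big_ord0. Qed.

Lemma ffK1 (a : K) : ffK a 1 = a.
Proof. by rewrite /ffK big_ord1 subr0. Qed.

(* the monomial of the t-th term of [mulT l (_, m1) (_, m2)] *)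
Definition monprod (m1 m2 : mon) (t : nat) : mon :=
  (m1.1 + m2.1 - (t * l)%N%:Z, (m1.2 + m2.2 - t)%N).

Lemma monprodC m1 m2 : monprod m1 m2 =1 monprod m2 m1.
Proof. by move=> t; rewrite /monprod (addrC m1.1) (addnC m1.2). Qed.

Lemma monprod_inj m1 m2 : injective (monprod m1 m2).
Proof.
rewrite /monprod => t t' [] /addrI /oppr_inj /eqP.
by rewrite eqz_nat eqn_pmul2r // => /eqP.
Qed.

Lemma cmul_monprod m1 m2 t :
  cmul l m1 m2 (monprod m1 m2 t) = 'C(m1.2, t)%:R * ffK (expK K l m2.1) t :> K.
Proof.
case: m1 m2 => i j [i' k]; rewrite /cmul /mulT /coefW big_map big_mkcond.
have tE t' : ((i + i' - (t' * l)%N%:Z, (j + k - t')%N) == monprod (i, j) (i', k) t :> mon)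
    = (t' == t).
  by apply/eqP/eqP => [/(@monprod_inj (i, j) (i', k))|->].
have [tj|jt] := ltnP t j.+1.
  rewrite (bigD1_seq t) ?mem_iota ?iota_uniq //= tE eqxx !mul1r big1 ?addr0 //.
  by move=> t' /negbTE; rewrite tE => ->.
rewrite bin_small // mul0r big1_seq // => t' /andP[_]; rewrite mem_iota /= tE.
by case: eqP => // ->; rewrite add0n ltnS leqNgt jt.
Qed.

Lemma cmul_support m1 m2 m : cmul l m1 m2 m != 0 :> K ->
  exists2 t, (t <= m1.2)%N & m = monprod m1 m2 t.
Proof.
case: m1 m2 => i j [i' k]; rewrite /cmul /mulT /coefW big_map /=.
have [/hasP[t]|/hasPn none] :=
  boolP (has (fun t => monprod (i, j) (i', k) t == m) (iota 0 j.+1)).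
  by rewrite mem_iota ltnS => tj /eqP <- _; exists t.
by rewrite big1_seq ?eqxx // => t /andP[tm /none]; rewrite tm.
Qed.

Lemma ccomm_support m1 m2 m : ccomm l m1 m2 m != 0 :> K ->
  exists2 t, (0 < t <= m1.2 + m2.2)%N & m = monprod m1 m2 t.
Proof.
move=> c12.
have [t tj mE] : exists2 t, (t <= m1.2 + m2.2)%N & m = monprod m1 m2 t.
  have [c1|c2] : cmul l m1 m2 m != 0 :> K \/ cmul l m2 m1 m != 0 :> K.
    apply/orP; apply: contraR c12; rewrite negb_or !negbK /ccomm.
    by case/andP=> /eqP-> /eqP->; rewrite subrr.
  - by have [t tj ->] := cmul_support c1; exists t; rewrite // (leq_trans tj) ?leq_addr.
  - have [t tj ->] := cmul_support c2; exists t; last exact: monprodC.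
    by rewrite (leq_trans tj) ?leq_addl.
subst m; exists t; rewrite // tj andbT lt0n; apply: contra_neq c12 => t0.
by rewrite /ccomm {2}monprodC t0 !cmul_monprod !ffK0 !bin0 subrr.
Qed.

Definition mcross (m1 m2 : mon) : int := m1.2%:Z * m2.1 - m2.2%:Z * m1.1.

Lemma mcross_neq0_Ydeg m1 m2 : mcross m1 m2 != 0 -> (0 < m1.2 + m2.2)%N.
Proof.
rewrite lt0n addn_eq0 /mcross; apply: contra => /andP[/eqP-> /eqP->].
by rewrite !mul0r subrr.
Qed.

Lemma ccomm_monprod1 m1 m2 :
  ccomm l m1 m2 (monprod m1 m2 1) = (mcross m1 m2)%:~R / l%:R :> K.
Proof.
rewrite /ccomm {2}monprodC !cmul_monprod !bin1 !ffK1 /expK /mcross.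
by rewrite rmorphB !rmorphM /=; ring.
Qed.

End Monomials.

Section Points.
Variable l : nat.
Hypothesis l_gt0 : (0 < l)%N.

Let l_neq0 : l%:R != 0 :> rat.
Proof. by rewrite pnatr_eq0 -lt0n. Qed.

Lemma pt_monprod m1 m2 t : (t <= m1.2 + m2.2)%N ->
  pt l (monprod l m1 m2 t) = subpt (addpt (pt l m1) (pt l m2)) (t%:R, t%:R).
Proof.
move=> tj; rewrite /pt /monprod /subpt /addpt /=; congr pair.
  by rewrite rmorphB rmorphD /= intr_posz natrM; field.
by rewrite natrB // natrD.
Qed.

Lemma pt_inj : injective (pt l).
Proof.
move=> [i j] [i' j'] [/(congr1 ( *%R^~ l%:R)) + /eqP]; rewrite !divfK // eqr_nat.
by move=> /intr_inj -> /eqP ->.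
Qed.

Lemma aligned_pt m1 m2 : aligned (pt l m1) (pt l m2) <-> mcross m1 m2 = 0.
Proof.
rewrite /aligned /pt /=.
have -> : m1.1%:~R / l%:R * m2.2%:R - m1.2%:R * (m2.1%:~R / l%:R) =
    - ((mcross m1 m2)%:~R / l%:R) :> rat.
  by rewrite /mcross rmorphB !rmorphM /= !intr_posz; ring.
split=> [/eqP|->]; last by rewrite mul0r oppr0.
by rewrite oppr_eq0 mulf_eq0 invr_eq0 (negbTE l_neq0) orbF intr_eq0 => /eqP.
Qed.

End Points.

Section Dominance.
Variable s : rat.

(* The order used to single out w (s = 1) and wbar (s = -1): compare s (a - b)
   first, then b; on a tie in a - b, comparing b is the same as comparing a. *)
Definition dominated (p q : rat * rat) : bool :=
  (s * (q.1 - q.2) < s * (p.1 - p.2)) ||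
  (s * (q.1 - q.2) == s * (p.1 - p.2)) && (q.2 <= p.2).

Lemma dominated_le p q : dominated p q -> s * (q.1 - q.2) <= s * (p.1 - p.2).
Proof. by case/orP=> [/ltW|/andP[/eqP-> _]]. Qed.

Lemma dominated_tie p q : dominated p q ->
  s * (q.1 - q.2) = s * (p.1 - p.2) -> q.2 <= p.2.
Proof. by case/orP=> [+ e|/andP[]//]; rewrite e ltxx. Qed.

Let dist_sub (u v w z r : rat) :
  s * (u + v - r - (w + z - r)) = s * (u - w) + s * (v - z).
Proof. by ring. Qed.

Lemma dominated_contract p1 p2 q1 q2 (t : rat) : 1 <= t ->
  dominated p1 q1 -> dominated p2 q2 ->
  dominated (subpt (addpt p1 p2) (1, 1)) (subpt (addpt q1 q2) (t, t)).
Proof.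
case: p1 p2 q1 q2 => [a1 b1] [a2 b2] [c1 d1] [c2 d2] t1.
rewrite /dominated /subpt /addpt /= !dist_sub.
move=> /orP[h1|/andP[/eqP-> h1]] /orP[h2|/andP[/eqP-> h2]]; apply/orP.
- by left; lra.
- by left; lra.
- by left; lra.
- by right; rewrite eqxx /=; lra.
Qed.

Lemma dominated_contract_eq p1 p2 q1 q2 (t : rat) : s != 0 -> 1 <= t ->
  dominated p1 q1 -> dominated p2 q2 ->
  subpt (addpt q1 q2) (t, t) = subpt (addpt p1 p2) (1, 1) -> q1 = p1 /\ q2 = p2.
Proof.
move=> s0; case: p1 p2 q1 q2 => [a1 b1] [a2 b2] [c1 d1] [c2 d2] t1 dom1 dom2.
rewrite /subpt /addpt /= => -[eA eB].
have /= le1 := dominated_le dom1; have /= le2 := dominated_le dom2.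
have sum_eq : s * (c1 - d1) + s * (c2 - d2) = s * (a1 - b1) + s * (a2 - b2).
  by rewrite -!mulrDr; congr (_ * _); lra.
have e1 : s * (c1 - d1) = s * (a1 - b1) by lra.
have e2 : s * (c2 - d2) = s * (a2 - b2) by lra.
have /= db1 := dominated_tie dom1 e1; have /= db2 := dominated_tie dom2 e2.
have [-> ->] : d1 = b1 /\ d2 = b2 by split; lra.
move: e1 e2 => /(mulfI s0) e1 /(mulfI s0) e2.
by split; congr pair; lra.
Qed.

End Dominance.

Section Leading.
Variables (K : fieldType) (l : nat).
Hypotheses (charK : [pchar K] =i pred0) (l_gt0 : (0 < l)%N).

Definition is_lead (s : rat) (P : Wl K) (p : rat * rat) : Prop :=
  inSupp l P p /\ forall q, inSupp l P q -> dominated s p q.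

Lemma is_w_lead P p : is_w l P p <-> is_lead 1 P p.
Proof.
have domE q : dominated 1 p q =
    (q.1 - q.2 < p.1 - p.2) || (q.1 - q.2 == p.1 - p.2) && (q.1 <= p.1).
  rewrite /dominated !mul1r; case: eqP => //= e.
  by apply/idP/idP => le; lra.
by split=> -[Pp dom]; split=> // q /dom; rewrite domE.
Qed.

Lemma is_wbar_lead P p : is_wbar l P p <-> is_lead (-1) P p.
Proof.
have domE q : dominated (-1) p q =
    (q.2 - q.1 < p.2 - p.1) || (q.2 - q.1 == p.2 - p.1) && (q.2 <= p.2).
  by rewrite /dominated !mulN1r !opprB.
by split=> -[Pp dom]; split=> // q /dom; rewrite domE.
Qed.

Lemma is_lead_neq0 s P p : is_lead s P p -> ~ zeroW P.
Proof. by case=> -[m [Pm _]] _ P0; rewrite P0 eqxx in Pm. Qed.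

Let natf_eq0 := (pcharf0P K).1 charK.

Let intr_neq0 (z : int) : z != 0 -> z%:~R != 0 :> K.
Proof. by case: z => n; rewrite ?NegzE ?rmorphN ?oppr_eq0 /= intr_posz natf_eq0. Qed.

Lemma mcross_neq0 m1 m2 : ~ aligned (pt l m1) (pt l m2) -> mcross m1 m2 != 0.
Proof. by move=> nal; apply/eqP => /(aligned_pt l_gt0). Qed.

Lemma ccomm_monprod1_neq0 m1 m2 : ~ aligned (pt l m1) (pt l m2) ->
  ccomm l m1 m2 (monprod l m1 m2 1) != 0 :> K.
Proof.
move=> nal; rewrite ccomm_monprod1 //; apply: mulf_neq0.
  exact/intr_neq0/mcross_neq0.
by rewrite invr_eq0 natf_eq0 -lt0n.
Qed.

Lemma ccomm_pt m1 m2 m : ccomm l m1 m2 m != 0 :> K ->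
  exists2 t : nat, (0 < t)%N &
    pt l m = subpt (addpt (pt l m1) (pt l m2)) (t%:R, t%:R).
Proof.
by case/ccomm_support=> // t /andP[t0 tj] ->; exists t; rewrite // pt_monprod.
Qed.

Lemma is_lead_commW s P Q p q : s != 0 -> is_lead s P p -> is_lead s Q q ->
  ~ aligned p q -> is_lead s (commW l P Q) (subpt (addpt p q) (1, 1)).
Proof.
move=> s0 [[mP [PmP <-]] domP] [[mQ [QmQ <-]] domQ] nal.
have {}domP m : coefW P m != 0 -> dominated s (pt l mP) (pt l m).
  by move=> Pm; apply: domP; exists m.
have {}domQ m : coefW Q m != 0 -> dominated s (pt l mQ) (pt l m).
  by move=> Qm; apply: domQ; exists m.
have ptstar : pt l (monprod l mP mQ 1) = subpt (addpt (pt l mP) (pt l mQ)) (1, 1).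
  by rewrite pt_monprod // mcross_neq0_Ydeg ?mcross_neq0.
split.
  exists (monprod l mP mQ 1); split => //.
  rewrite (coefW_commW_single PmP QmQ); first by rewrite !mulf_neq0 ?ccomm_monprod1_neq0.
  move=> m1 m2 P1 Q2 /ccomm_pt[t t0 ptE].
  have [] := dominated_contract_eq s0 _ (domP _ P1) (domQ _ Q2)
    (etrans (esym ptE) ptstar); first by rewrite ler1n.
  by move=> /(pt_inj l_gt0) -> /(pt_inj l_gt0) ->.
move=> _ [m [cm <-]].
have [m1 [m2 [P1 Q2 /ccomm_pt[t t0 ->]]]] := coefW_commW_neq0 cm.
by apply: dominated_contract; rewrite ?ler1n ?domP ?domQ.
Qed.

End Leading.

Theorem proposition1p10 (K : fieldType) (l : nat)
  (charK : [pchar K] =i pred0) (l_gt0 : (0 < l)%N)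
  (P Q : Wl K) (nzP : ~ zeroW P) (nzQ : ~ zeroW Q) :
  (forall p q, is_w l P p -> is_w l Q q -> ~ aligned p q ->
     ~ zeroW (commW l P Q) /\
     is_w l (commW l P Q) (subpt (addpt p q) (1, 1))) /\
  (forall p q, is_wbar l P p -> is_wbar l Q q -> ~ aligned p q ->
     ~ zeroW (commW l P Q) /\
     is_wbar l (commW l P Q) (subpt (addpt p q) (1, 1))).
Proof.
split=> p q.
- move=> /is_w_lead wP /is_w_lead wQ nal.
  have lead := is_lead_commW charK l_gt0 (oner_neq0 _) wP wQ nal.
  by split; [exact: is_lead_neq0 lead | exact/is_w_lead].
- move=> /is_wbar_lead wP /is_wbar_lead wQ nal.
  have lead := is_lead_commW charK l_gt0 (isT : -1 != 0 :> rat) wP wQ nal.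
  by split; [exact: is_lead_neq0 lead | exact/is_wbar_lead].
Qed.
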